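(* In the setting of the discrete snake in $\mathbb{Z}^4$ described in the context, let $k\ge1$ be such that $\mathbb{P}(\widehat W_k=0)>0$, and let $\widetilde W_k=(\widetilde W_k(j))_{j\le0}$ with $\widetilde W_k(j)=W_k(\zeta_k+j)$. Under $\mathbb{P}(\cdot\mid\widehat W_k=0)$, the pairs $(W_0,\widetilde W_k)$ and $(\widetilde W_k,W_0)$ have the same distribution.
   Context: $\theta$ is a symmetric probability measure on $\mathbb{Z}^4$ with small exponential moments, not supported on a strict subgroup, with covariance matrix $\sigma^2\mathrm{Id}$. $S$ is the random walk with jump law $\theta$ started at $0$. The discrete snake $(W_n)$ is the Markov chain on paths $w:\{k\le\zeta(w)\}\to\mathbb{Z}^4$ with kernel $Q(w,\cdot)=\frac12\delta_{\overline w}+\frac12\sum_x\theta(x)\delta_{w\oplus(\widehat w+x)}$ ($\widehat w=w(\zeta(w))$, $\overline w$ erases the endpoint, $w\oplus x$ appends $x$); $\zeta_n=\zeta(W_n)$. Under $\mathbb{P}$, $\zeta_0=0$ and $W_0=(-S_{-k})_{k\le0}$. *)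

From HB Require Import structures.
From mathcomp Require Import all_boot all_order all_algebra.
From mathcomp Require Import all_classical all_reals all_analysis.
Set Implicit Arguments. Unset Strict Implicit. Unset Printing Implicit Defensive.
Import Order.TTheory GRing.Theory Num.Theory.
Local Open Scope classical_set_scope.
Local Open Scope ring_scope.

Notation Z4 := 'rV[int]_4.

(* l^1 norm on Z^4 (any norm gives the same notion of small exponential moments) *)
Definition normZ4 (R : realType) (x : Z4) : R := (\sum_(i < 4) `|x ord0 i|)%:~R.

Definition is_pmf (R : realType) (theta : Z4 -> R) :=
  (forall x, 0 <= theta x) /\ (\esum_(x in [set: Z4]) (theta x)%:E = 1)%E.

Definition symmetric_law (R : realType) (theta : Z4 -> R) :=
  forall x, theta (- x) = theta x.

Definition small_exp_moments (R : realType) (theta : Z4 -> R) :=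
  exists2 lam : R, 0 < lam &
    (\esum_(x in [set: Z4]) (theta x * expR (lam * normZ4 R x))%:E < +oo)%E.

Definition is_subgroupZ4 (G : set Z4) :=
  G 0 /\ (forall x y, G x -> G y -> G (x - y)).

Definition generating_support (R : realType) (theta : Z4 -> R) :=
  forall G : set Z4, is_subgroupZ4 G -> [set x | 0 < theta x] `<=` G -> G = setT.

(* covariance matrix sigma^2 Id:  E[X_i^2] = sigma^2 and, for i <> j,
   E[(X_i X_j)^+] = E[(X_i X_j)^-]  (i.e. E[X_i X_j] = 0, both being finite) *)
Definition covariance_scalar (R : realType) (theta : Z4 -> R) (sigma : R) :=
  (forall i : 'I_4,
     (\esum_(x in [set: Z4]) (theta x * ((x ord0 i)%:~R) ^+ 2)%:E = (sigma ^+ 2)%:E)%E) /\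
  (forall i j : 'I_4, i != j ->
     (\esum_(x in [set: Z4]) (theta x * Num.max ((x ord0 i * x ord0 j)%:~R) 0)%:E =
      \esum_(x in [set: Z4]) (theta x * Num.max (- (x ord0 i * x ord0 j)%:~R) 0)%:E)%E).

(* A path w : {k <= zeta(w)} -> Z^4 is encoded by its lifetime zeta(w) : int
   and its "backward" values: ptail w m = w(zeta(w) - m), m : nat. *)
Record path := Path { pzeta : int ; ptail : nat -> Z4 }.

Definition phat (w : path) : Z4 := ptail w 0.
Definition perase (w : path) : path := Path (pzeta w - 1) (fun m => ptail w m.+1).
Definition pappend (w : path) (y : Z4) : path :=
  Path (pzeta w + 1) (fun m => if m is m'.+1 then ptail w m' else y).

(* one step of the kernel Q(w,.) = 1/2 delta_{\overline w}
   + 1/2 sum_x theta(x) delta_{w (+) (\hat w + x)}, driven by a fair coin c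
   (true = erase) and an independent jump x with law theta *)
Definition snake_step (w : path) (c : bool) (x : Z4) : path :=
  if c then perase w else pappend w (phat w + x).

Fixpoint snake (W0 : path) (c : nat -> bool) (X : nat -> Z4) (n : nat) : path :=
  if n is n'.+1 then snake_step (snake W0 c X n') (c n') (X n') else W0.

Definition rwalk (xi : nat -> Z4) (m : nat) : Z4 := \sum_(i < m) xi i.

Definition snake_init (xi : nat -> Z4) : path := Path 0 (fun m => - rwalk xi m).

(* \widetilde w (j) = w(zeta(w) + j), j <= 0, encoded as j = -m *)
Definition pshift (w : path) : nat -> Z4 := ptail w.

Definition preimages {d} {Omega : measurableType d} {T : Type} (Y : Omega -> T)
  : set (set Omega) := [set A | exists B : set T, A = Y @^-1` B].

Definition discrete_rv {d} {Omega : measurableType d} {T : Type} (Y : Omega -> T) :=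
  forall B : set T, measurable (Y @^-1` B).

Definition mutually_independent {d} {Omega : measurableType d} {R : realType}
  (P : probability Omega R) {I : eqType} (F : I -> set (set Omega)) :=
  forall (J : seq I) (A : I -> set Omega), uniq J ->
    (forall i, i \in J -> F i (A i)) ->
    P [set w | forall i, i \in J -> A i w] = (\prod_(i <- J) P (A i))%E.

Definition condP {d} {Omega : measurableType d} {R : realType}
  (P : probability Omega R) (E A : set Omega) : R :=
  fine (P (A `&` E)) / fine (P E).

Definition seq_pair_cylinders : set (set ((nat -> Z4) * (nat -> Z4))) :=
  [set A | exists (m : nat) (x : Z4),
     A = [set p | p.1 m = x] \/ A = [set p | p.2 m = x]].

Definition seq_pair_measurable (B : set ((nat -> Z4) * (nat -> Z4))) :=
  <<s seq_pair_cylinders >> B.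

From HB Require Import structures.
From mathcomp Require Import all_boot all_order all_algebra.
From mathcomp Require Import all_classical all_reals all_analysis.
From mathcomp Require Import zify ring.
Set Implicit Arguments. Unset Strict Implicit. Unset Printing Implicit Defensive.
Import Order.TTheory GRing.Theory Num.Theory.
Local Open Scope classical_set_scope.
Local Open Scope ring_scope.

(* Condition on the first k coins.  They determine how many jumps appended to
   the initial path survive at time k (u) and how many points of the initial
   path have been erased (m); given them, the event that W_0 and W~_k start with
   prescribed windows a and b and that W^_k = 0 fixes finitely many independent
   increments, so its probability is 2^-k times a product of values of theta.
   Matching the overlap of the two windows shows that this product is unchanged
   when (u, a) and (m, b) are exchanged, and reversing and negating the coin word
   exchanges u and m.  Hence both pairs charge every long cylinder equally on
   {W^_k = 0}, and a pi-lambda argument extends this to all measurable sets. *)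

(* After [n] steps, [(coin_stack c n).1] lists the times of the appends still
   present in the path, latest first, and [(coin_stack c n).2] counts the
   points of the initial path erased so far. *)
Definition stack_step (p : seq nat * nat) (n : nat) (erase : bool) : seq nat * nat :=
  if erase then (if p.1 is _ :: s then (s, p.2) else (p.1, p.2.+1))
  else (n :: p.1, p.2).

Fixpoint coin_stack (c : nat -> bool) (n : nat) : seq nat * nat :=
  if n is n'.+1 then stack_step (coin_stack c n') n' (c n') else ([::], 0%N).

Lemma coin_stack_bounded_uniq c n :
  all (fun t => (t < n)%N) (coin_stack c n).1 && uniq (coin_stack c n).1.
Proof.
elim: n => [//|n] /=; rewrite /stack_step.
case: (coin_stack c n) => s m /= /andP[lt_s uniq_s]; case: (c n) => /=.
  case: s lt_s uniq_s => [//|t s] /= /andP[_ lt_s] /andP[_ ->].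
  by rewrite andbT; apply: sub_all lt_s => x /ltnW.
rewrite ltnSn uniq_s andbT /= (sub_all _ lt_s) => [|x /ltnW //].
by apply/negP => /(allP lt_s); rewrite ltnn.
Qed.

Lemma uniq_coin_stack c n : uniq (coin_stack c n).1.
Proof. by case/andP: (coin_stack_bounded_uniq c n). Qed.

Lemma size_coin_stack c n : (size (coin_stack c n).1 + (coin_stack c n).2 <= n)%N.
Proof.
elim: n => [//|n IH] /=; rewrite /stack_step.
by case: (c n); case: (coin_stack c n) IH => [[|t s] m] /=; lia.
Qed.

(* Cancelling each erasure ([true]) against the latest unmatched append
   ([false]) reduces a coin word to [true^e false^a];
   [unmatched] returns [(a, e)], and [unmatched_cat] composes such pairs. *)
Definition unmatched_cat (p q : nat * nat) : nat * nat :=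
  (q.1 + (p.1 - q.2), p.2 + (q.2 - p.1))%N.

Definition unmatched (l : seq bool) : nat * nat :=
  foldr (fun b => unmatched_cat (if b then (0, 1) else (1, 0))%N) (0, 0)%N l.

Lemma unmatched_catA : associative unmatched_cat.
Proof. by move=> [a b] [c d] [e f]; rewrite /unmatched_cat /=; congr pair; lia. Qed.

Lemma unmatched_cat_seq l l' :
  unmatched (l ++ l') = unmatched_cat (unmatched l) (unmatched l').
Proof.
elim: l => [|x l IH] /=; last by rewrite IH unmatched_catA.
by case: (unmatched l') => a b; rewrite /unmatched_cat /=; congr pair; lia.
Qed.

Lemma unmatched_rev_negb l :
  unmatched (rev (map negb l)) = ((unmatched l).2, (unmatched l).1).
Proof.
elim: l => [//|x l IH] /=; rewrite rev_cons -cats1 unmatched_cat_seq IH /=.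
by case: (unmatched l) => a b; case: x; rewrite /unmatched_cat /=; congr pair; lia.
Qed.

Lemma coin_stack_unmatched c n :
  (size (coin_stack c n).1, (coin_stack c n).2) = unmatched [seq c i | i <- iota 0 n].
Proof.
elim: n => [//|n IH]; rewrite -addn1 iotaD map_cat unmatched_cat_seq -IH addn1 /=.
rewrite /stack_step; case: (c n); case: (coin_stack c n) => [[|t s] m];
  by rewrite /unmatched_cat /=; congr pair; lia.
Qed.

Lemma rwalk0 xi : rwalk xi 0 = 0.
Proof. by rewrite /rwalk big_ord0. Qed.

Lemma rwalkS xi j : rwalk xi j.+1 = rwalk xi j + xi j.
Proof. by rewrite /rwalk big_ord_recr. Qed.

Lemma rwalk_incrP xi (v : nat -> Z4) N :
  (forall j, (j <= N)%N -> - rwalk xi j = v j) <->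
  v 0%N = 0 /\ (forall j, (j < N)%N -> xi j = v j - v j.+1).
Proof.
split=> [Sv | [v0 xiv] j].
  split=> [|j lt_jN]; first by rewrite -Sv // rwalk0 oppr0.
  by rewrite -Sv ?(ltnW lt_jN) // -Sv // rwalkS opprK addKr.
elim: j => [|j IH] le_jN; first by rewrite rwalk0 oppr0 v0.
by rewrite rwalkS opprD IH ?(ltnW le_jN) // xiv // opprB addrC subrK.
Qed.

Lemma telescope_drop (V : zmodType) (f : nat -> V) (b : nat -> V) (s : seq nat) :
  (forall r, (r < size s)%N -> f (nth 0%N s r) = b r - b r.+1) ->
  forall r, (r <= size s)%N -> \sum_(t <- drop r s) f t = b r - b (size s).
Proof.
elim: s b => [|t s IH] b fb [|r] /= le_r; first by rewrite big_nil subrr.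
- by [].
- have := IH (b \o S) (fun i => fb i.+1) 0%N (leq0n _); rewrite drop0 big_cons => ->.
  by rewrite (fb 0%N) // addrA subrK.
- exact: IH (b \o S) (fun i => fb i.+1) r le_r.
Qed.

Definition stack_path (xi X : nat -> Z4) (p : seq nat * nat) (r : nat) : Z4 :=
  if (r < size p.1)%N then - rwalk xi p.2 + \sum_(t <- drop r p.1) X t
  else - rwalk xi (r - size p.1 + p.2).

Lemma snake_stack_path xi c X n r :
  ptail (snake (snake_init xi) c X n) r = stack_path xi X (coin_stack c n) r.
Proof.
elim: n r => [|n IH] r /=; first by rewrite /stack_path /= subn0 addn0.
rewrite /snake_step /stack_step /stack_path; case: (c n) => /=.
  rewrite IH /stack_path; case: (coin_stack c n) => [[|t s] m] /=.
    by rewrite !subn0 addSnnS.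
  by rewrite ltnS; case: ifP => // _; rewrite subSS.
case: r => [|r] /=; rewrite ?/phat IH /stack_path; case: (coin_stack c n) => s m /=.
  by case: s => [|t s] /=; rewrite ?add0n ?big_seq1 ?big_cons ?[X n + _]addrC ?addrA.
by rewrite ltnS subSS.
Qed.

Lemma stack_path_alive xi X p r : (r <= size p.1)%N ->
  stack_path xi X p r = - rwalk xi p.2 + \sum_(t <- drop r p.1) X t.
Proof.
rewrite /stack_path leq_eqVlt => /orP[/eqP ->|->] //.
by rewrite ltnn subnn add0n drop_size big_nil addr0.
Qed.

Lemma stack_path_initial xi X p r : (size p.1 <= r)%N ->
  stack_path xi X p r = - rwalk xi (r - size p.1 + p.2).
Proof. by rewrite /stack_path ltnNge => ->. Qed.

Lemma snake_ext W0 c c' X X' n :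
  (forall i, (i < n)%N -> c i = c' i /\ X i = X' i) ->
  snake W0 c X n = snake W0 c' X' n.
Proof.
elim: n => [//|n IH] eq_cX /=; have [-> ->] := eq_cX n (ltnSn n).
by rewrite IH // => i lt_in; apply: eq_cX; exact: ltnW.
Qed.

Section SnakeWeight.
Variables (V : zmodType) (R : comPzSemiRingType) (theta : V -> R).
Implicit Types (f a b : nat -> V) (M u m : nat).

Definition incr_prod f (i j : nat) : R := \prod_(i <= t < j) theta (f t - f t.+1).

Lemma incr_prod_cat f i j l : (i <= j <= l)%N ->
  incr_prod f i l = incr_prod f i j * incr_prod f j l.
Proof. by move=> /andP[ij jl]; rewrite /incr_prod (big_cat_nat ij jl). Qed.

Lemma eq_incr_prod f f' i j : (forall t, (i <= t <= j)%N -> f t = f' t) ->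
  incr_prod f i j = incr_prod f' i j.
Proof.
move=> ff'; apply: eq_big_nat => t /andP[it tj].
by rewrite !ff' ?it ?(ltnW tj) //= (leq_trans it).
Qed.

Lemma incr_prod_addn f i j n :
  incr_prod f (i + n) (j + n) = incr_prod (fun t => f (t + n)%N) i j.
Proof. by rewrite /incr_prod big_addn addnK. Qed.

(* [a] and [b] are the first [M] points of the initial path and of the path at
   time [k] read from its endpoint, when [u] appended points survive and [m]
   points of the initial path were erased: for [u <= r], [b r] is the point
   [r - u + m] of the initial path.  [glued_path M u m a b] is the initial path
   as far as these two windows determine it. *)
Definition glued_path M u m a b (j : nat) : V :=
  if (j < M)%N then a j else b (j + u - m)%N.

Definition compatible M u m a b : bool :=
  [&& a 0%N == 0, b 0%N == 0 &
    [forall r : 'I_M, (u <= r)%N ==> (r + m - u < M)%N ==> (b r == a (r + m - u)%N)]].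

Definition snake_weight M u m a b : R :=
  if compatible M u m a b then
    incr_prod (glued_path M u m a b) 0 (M.-1 + (m - u)) * incr_prod b 0 u
  else 0.

Lemma compatibleP M u m a b : reflect
  [/\ a 0%N = 0, b 0%N = 0 &
     forall r, (u <= r)%N -> (r < M)%N -> (r + m - u < M)%N -> b r = a (r + m - u)%N]
  (compatible M u m a b).
Proof.
apply: (iffP and3P) => [[/eqP a0 /eqP b0 /forallP ab]|[a0 b0 ab]].
  by split=> // r ur rM rmM; have /implyP/(_ ur)/implyP/(_ rmM)/eqP := ab (Ordinal rM).
split; [exact/eqP | exact/eqP |].
by apply/forallP => r; apply/implyP => ur; apply/implyP => rmM; apply/eqP/ab.
Qed.

Lemma compatible_sym M u m a b : (u < M)%N -> (m < M)%N ->
  compatible M u m a b = compatible M m u b a.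
Proof.
move=> uM mM; apply/compatibleP/compatibleP => -[a0 b0 ab]; split=> // r ur rM rmM.
  have := ab (r + u - m)%N; rewrite (_ : r + u - m + m - u = r)%N; last by lia.
  by move=> -> //; lia.
have := ab (r + m - u)%N; rewrite (_ : r + m - u + u - m = r)%N; last by lia.
by move=> -> //; lia.
Qed.

Lemma incr_prod_glued_lt M u m a b j : (j < M)%N ->
  incr_prod (glued_path M u m a b) 0 j = incr_prod a 0 j.
Proof.
move=> jM; apply: eq_incr_prod => t /andP[_ tj].
by rewrite /glued_path (leq_ltn_trans tj jM).
Qed.

(* Past [M - 1] the glued path runs along [b] shifted by [m - u]; on [[m, M - 1]]
   the overlap condition turns the increments of [a] into those of [b]. *)
Lemma incr_prod_glued M u m a b : (u <= m < M)%N -> compatible M u m a b ->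
  incr_prod (glued_path M u m a b) 0 (M.-1 + (m - u)) =
  incr_prod a 0 m * incr_prod b u M.-1.
Proof.
move=> /andP[um mM] /compatibleP[_ _ ab].
rewrite (@incr_prod_cat _ _ M.-1) ?leq_addr // incr_prod_glued_lt; last by lia.
rewrite (@incr_prod_cat a _ m) ?leq0n /=; last by lia.
rewrite (@incr_prod_cat b _ (M.-1 - (m - u))); last by lia.
rewrite -!mulrA; congr (_ * _); congr (_ * _).
  rewrite [in LHS](_ : m = u + (m - u))%N; last by lia.
  rewrite [X in incr_prod a _ X](_ : M.-1 = M.-1 - (m - u) + (m - u))%N; last by lia.
  rewrite incr_prod_addn; apply: eq_incr_prod => t /andP[ut tM].
  by rewrite ab; [congr a | | |]; lia.
rewrite [X in incr_prod _ X](_ : M.-1 = M.-1 - (m - u) + (m - u))%N; last by lia.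
rewrite incr_prod_addn; apply: eq_incr_prod => t /andP[tM _].
rewrite /glued_path; case: ltnP => [tlt|_]; last by congr b; lia.
by rewrite ab; [congr a | | |]; lia.
Qed.

Lemma snake_weight_sym M u m a b : (u < M)%N -> (m < M)%N ->
  snake_weight M u m a b = snake_weight M m u b a.
Proof.
wlog um : u m a b / (u <= m)%N => [sym uM mM|uM mM].
  by case: (leqP u m) => [um|/ltnW mu]; [exact: sym | rewrite (sym m u b a)].
rewrite /snake_weight -(@compatible_sym M u m a b uM mM); case: ifP => [abc|//].
rewrite incr_prod_glued ?um // (_ : u - m = 0)%N ?addn0; last by lia.
rewrite incr_prod_glued_lt; last by lia.
rewrite -mulrA [_ * incr_prod b 0 u]mulrC -incr_prod_cat; [exact: mulrC | lia].
Qed.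

End SnakeWeight.

Definition snake_window (xi : nat -> Z4) (c : nat -> bool) (X : nat -> Z4)
    (k M : nat) (a b : nat -> Z4) : Prop :=
  (forall r, (r < M)%N ->
     - rwalk xi r = a r /\ ptail (snake (snake_init xi) c X k) r = b r) /\
  phat (snake (snake_init xi) c X k) = 0.

Section SnakeWindow.
Variables (xi : nat -> Z4) (c : nat -> bool) (X : nat -> Z4).
Variables (k M : nat) (a b : nat -> Z4).
Hypothesis kM : (k < M)%N.

Local Notation W := (snake (snake_init xi) c X k).
Local Notation s := (coin_stack c k).1.
Local Notation u := (size (coin_stack c k).1).
Local Notation m := (coin_stack c k).2.
Local Notation v := (glued_path M u m a b).

Let um_k : (u + m <= k)%N := size_coin_stack c k.

Let W_alive r : (r <= u)%N -> ptail W r = - rwalk xi m + \sum_(t <- drop r s) X t.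
Proof. by move=> ru; rewrite snake_stack_path stack_path_alive. Qed.

Let W_initial r : (u <= r)%N -> ptail W r = - rwalk xi (r - u + m).
Proof. by move=> ur; rewrite snake_stack_path stack_path_initial. Qed.

Lemma snake_window_stack : snake_window xi c X k M a b ->
  [/\ compatible M u m a b,
      forall j, (j < M.-1 + (m - u))%N -> xi j = v j - v j.+1 &
      forall r, (r < u)%N -> X (nth 0%N s r) = b r - b r.+1].
Proof.
move=> [ab W0]; split.
- apply/compatibleP; split.
  + by have [<- _] := ab 0%N (leq_ltn_trans (leq0n k) kM); rewrite rwalk0 oppr0.
  + by have [_ <-] := ab 0%N (leq_ltn_trans (leq0n k) kM).
  + move=> r ur rM rmM; have [_ <-] := ab r rM; have [<- _] := ab _ rmM.
    by rewrite W_initial //; congr (- rwalk _ _); lia.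
- apply: (proj2 ((rwalk_incrP xi v _).1 _)) => j jN.
  rewrite /glued_path; case: ltnP => jM.
    by have [] := ab j jM.
  have [_ <-] := ab (j + u - m)%N ltac:(lia).
  by rewrite W_initial; [congr (- rwalk _ _) | ]; lia.
- move=> r ru; have [_ <-] := ab r ltac:(lia); have [_ <-] := ab r.+1 ltac:(lia).
  by rewrite !W_alive ?(ltnW ru) // (drop_nth 0%N ru) big_cons addrCA addrK.
Qed.

Lemma stack_snake_window : compatible M u m a b ->
  (forall j, (j < M.-1 + (m - u))%N -> xi j = v j - v j.+1) ->
  (forall r, (r < u)%N -> X (nth 0%N s r) = b r - b r.+1) ->
  snake_window xi c X k M a b.
Proof.
move=> /[dup] abc /compatibleP[a0 b0 ab] xi_v X_b.
have v0 : v 0%N = 0 by rewrite /glued_path (leq_ltn_trans (leq0n k) kM).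
have S_v := (rwalk_incrP xi v (M.-1 + (m - u))).2 (conj v0 xi_v).
have S_a r : (r < M)%N -> - rwalk xi r = a r.
  by move=> rM; rewrite S_v; [rewrite /glued_path rM | lia].
have W_b r : (r < M)%N -> ptail W r = b r.
  move=> rM; case: (ltnP r u) => [ru|ur].
    rewrite W_alive ?(ltnW ru) // (telescope_drop X_b) ?(ltnW ru) //.
    rewrite S_a; last by lia.
    by rewrite (ab u) ?subnn ?addKn; [rewrite addrC subrK | lia..].
  rewrite W_initial //; case: (ltnP (r - u + m) M) => [rmM|Mrm].
    by rewrite S_a // ab //; [congr a | ]; lia.
  by rewrite S_v; [rewrite /glued_path ltnNge Mrm /=; congr b | ]; lia.
split; first by move=> r rM; split; [exact: S_a | exact: W_b].
by rewrite /phat W_b //; lia.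
Qed.

End SnakeWindow.

Definition rev_negb_tuple k (cs : k.-tuple bool) : k.-tuple bool :=
  rev_tuple (map_tuple negb cs).

Lemma rev_negb_tupleK k : involutive (@rev_negb_tuple k).
Proof.
move=> cs; apply: val_inj => /=; rewrite map_rev revK -map_comp.
by rewrite (eq_map (g := id)) ?map_id // => x /=; rewrite negbK.
Qed.

Lemma coin_stack_tuple k (cs : k.-tuple bool) :
  (size (coin_stack (nth false cs) k).1, (coin_stack (nth false cs) k).2) =
  unmatched cs.
Proof. by rewrite coin_stack_unmatched -{2}(mkseq_nth false cs) size_tuple. Qed.

Lemma coin_stack_rev_negb k (cs : k.-tuple bool) :
  (size (coin_stack (nth false (rev_negb_tuple cs)) k).1,
   (coin_stack (nth false (rev_negb_tuple cs)) k).2) =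
  ((coin_stack (nth false cs) k).2, size (coin_stack (nth false cs) k).1).
Proof. by rewrite coin_stack_tuple /= unmatched_rev_negb -coin_stack_tuple. Qed.

Definition stack_weight (R : comPzSemiRingType) (theta : Z4 -> R) (M k : nat)
    (a b : nat -> Z4) (cs : seq bool) : R :=
  snake_weight theta M (size (coin_stack (nth false cs) k).1)
    (coin_stack (nth false cs) k).2 a b.

(* Reversing and negating the coin word reverses the time of the snake's
   contour, exchanging surviving appends and erasures. *)
Lemma sum_stack_weight_sym (R : comPzSemiRingType) (theta : Z4 -> R) M k a b :
  (k < M)%N ->
  \sum_(cs : k.-tuple bool) stack_weight theta M k a b cs =
  \sum_(cs : k.-tuple bool) stack_weight theta M k b a cs.
Proof.
move=> kM; rewrite [RHS](reindex_inj (inv_inj (@rev_negb_tupleK k))) /=.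
apply: eq_bigr => cs _; rewrite /stack_weight.
case: (coin_stack_rev_negb cs) => -> ->.
by apply: snake_weight_sym; have := size_coin_stack (nth false cs) k; lia.
Qed.

Lemma snake_window_coins xi c c' X k M a b :
  (forall n, (n < k)%N -> c n = c' n) ->
  snake_window xi c X k M a b = snake_window xi c' X k M a b.
Proof. by move=> cc'; rewrite /snake_window (@snake_ext _ c c' X X) // => n /cc'. Qed.

Lemma measure_big_setU_seq d (T : measurableType d) (R : realType)
    (mu : {measure set T -> \bar R}) (I : eqType) (l : seq I) (F : I -> set T) :
  uniq l -> (forall i, measurable (F i)) ->
  (forall i j, i != j -> F i `&` F j = set0) ->
  mu (\big[setU/set0]_(i <- l) F i) = (\sum_(i <- l) mu (F i))%E.
Proof.
move=> + mF dF; elim: l => [|i l IH]; first by rewrite !big_nil measure0.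
rewrite cons_uniq => /andP[il ul].
rewrite !big_cons measureU; first by rewrite -(IH ul).
- exact: mF.
- by apply: bigsetU_measurable => j _; exact: mF.
rewrite big_distrr /= big1_seq // => j /andP[_ jl]; apply: dF.
by apply: contraNneq il => ->.
Qed.

Section PreimageAgreement.
Context d (Omega : measurableType d) (R : realType).
Context (mu : {finite_measure set Omega -> \bar R}) (T : Type).
Context (Y1 Y2 : Omega -> T) (E : set Omega).

Definition preimage_agree : set (set T) :=
  [set B | [/\ measurable (Y1 @^-1` B `&` E), measurable (Y2 @^-1` B `&` E) &
             mu (Y1 @^-1` B `&` E) = mu (Y2 @^-1` B `&` E)]].

Hypothesis mE : measurable E.

Lemma dynkin_preimage_agree : dynkin preimage_agree.
Proof.
have muE : (mu E < +oo)%E by have /fin_numPlt/andP[] := fin_num_measure mu E mE.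
split.
- by rewrite /preimage_agree /= !preimage_setT !setTI.
- move=> B [m1 m2 e]; rewrite /preimage_agree /=.
  have preC Y : Y @^-1` (~` B) `&` E = E `\` (Y @^-1` B `&` E).
    apply/seteqP; split=> w /= [w1 w2]; split=> //; first by case.
    by move=> BY; exact: w2.
  rewrite !preC; split; [exact: measurableD | exact: measurableD |].
  have EI A : E `&` (A `&` E) = A `&` E by rewrite setIC -setIA setIid.
  by rewrite !measureD // !EI; congr (_ - _)%E; exact: e.
- move=> F tF agF.
  have preU Y : Y @^-1` (\bigcup_n F n) `&` E = \bigcup_n (Y @^-1` F n `&` E).
    by rewrite preimage_bigcup setI_bigcupl.
  have tY Y : trivIset setT (fun n => Y @^-1` F n `&` E).
    by move=> i j _ _ [w [[Fi _] [Fj _]]]; apply: (tF i j) => //; exists (Y w).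
  rewrite /preimage_agree /= !preU; split.
  + by apply: bigcup_measurable => n _; case: (agF n).
  + by apply: bigcup_measurable => n _; case: (agF n).
  + rewrite !measure_bigcup //=; try by move=> n _; case: (agF n).
    by apply: eq_eseriesr => n _; case: (agF n).
Qed.

Lemma sigma_preimage_agree (G : set (set T)) : setI_closed G ->
  G `<=` preimage_agree -> <<s G >> `<=` preimage_agree.
Proof.
move=> GI Gag; apply: (lambda_system_subset GI) => //.
exact/dynkin_lambda_system/dynkin_preimage_agree.
Qed.

End PreimageAgreement.

Section Cylinders.
Variable T : Type.
Implicit Types (a b : nat -> T) (p q : (nat -> T) * (nat -> T)).

Definition cylinder (M : nat) a b : set ((nat -> T) * (nat -> T)) :=
  [set p | forall r, (r < M)%N -> p.1 r = a r /\ p.2 r = b r].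

Definition long_cylinders (k : nat) : set (set ((nat -> T) * (nat -> T))) :=
  [set A | A = set0 \/ exists M a b, (k < M)%N /\ A = cylinder M a b].

Definition prefix_determined (M : nat) (A : set ((nat -> T) * (nat -> T))) :=
  forall p q, (forall r, (r < M)%N -> p.1 r = q.1 r /\ p.2 r = q.2 r) -> A p -> A q.

Lemma long_cylindersI k M A a b : (k < M)%N -> prefix_determined M A ->
  long_cylinders k (A `&` cylinder M a b).
Proof.
move=> kM detA; have [[p [Ap pab]]|none] := pselect (A `&` cylinder M a b !=set0).
  right; exists M, a, b; split=> //; apply/seteqP; split=> [q [] //|q qab].
  split=> //; apply: detA Ap => r rM.
  by have [-> ->] := pab r rM; have [-> ->] := qab r rM.
by left; apply/seteqP; split=> // q Aq; apply: none; exists q.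
Qed.

Lemma prefix_determined_cylinder M M' a b : (M <= M')%N ->
  prefix_determined M' (cylinder M a b).
Proof.
move=> MM' p q pq pab r rM; have [<- <-] := pq r (leq_trans rM MM').
exact: pab.
Qed.

Lemma setI_closed_long_cylinders k : setI_closed (long_cylinders k).
Proof.
have cylindersI M a b M' a' b' : (M <= M')%N -> (k < M')%N ->
    long_cylinders k (cylinder M a b `&` cylinder M' a' b').
  by move=> MM' kM'; exact: long_cylindersI kM' (prefix_determined_cylinder MM').
move=> A B [->|[M [a [b [kM ->]]]]]; first by rewrite set0I; left.
move=> [->|[M' [a' [b' [kM' ->]]]]]; first by rewrite setI0; left.
case: (leqP M M') => [MM'|/ltnW M'M]; first exact: cylindersI.
by rewrite setIC; exact: cylindersI.
Qed.

End Cylinders.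

Definition prefix_cylinder (M n : nat) : set ((nat -> Z4) * (nat -> Z4)) :=
  if unpickle n is Some l then
    cylinder M (fun r => (nth (0, 0) l r).1) (fun r => (nth (0, 0) l r).2)
  else set0.

Lemma bigcup_prefix_cylinder M : \bigcup_n prefix_cylinder M n = setT.
Proof.
apply/seteqP; split=> // p _.
exists (pickle [seq (p.1 r, p.2 r) | r <- iota 0 M]) => //.
rewrite /prefix_cylinder pickleK => r rM /=.
by rewrite (nth_map 0%N) ?size_iota // nth_iota.
Qed.

Lemma sigma_long_cylinders_prefix_determined k M A : (k < M)%N ->
  prefix_determined M A -> <<s @long_cylinders Z4 k >> A.
Proof.
move=> kM detA.
rewrite -(setIT A) -(bigcup_prefix_cylinder M) setI_bigcupr.
apply: sigma_algebra_bigcup => n; apply: sub_sigma_algebra.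
rewrite /prefix_cylinder; case: unpickle => [l|]; first exact: long_cylindersI.
by rewrite setI0; left.
Qed.

Lemma seq_pair_measurable_long_cylinders k :
  <<s seq_pair_cylinders >> `<=` <<s @long_cylinders Z4 k >>.
Proof.
apply: smallest_sub; first exact: smallest_sigma_algebra.
move=> A [m [x [->|->]]];
  apply: (@sigma_long_cylinders_prefix_determined _ (maxn m.+1 k.+1));
  rewrite ?leq_max ?ltnSn ?orbT // => p q /(_ m);
  by rewrite leq_max ltnSn => /(_ isT) [e1 e2]; rewrite /mkset -?e1 -?e2.
Qed.

Section SnakeProbability.
Context (R : realType) (theta : Z4 -> R).
Context (d : measure_display) (Omega : measurableType d) (P : probability Omega R).
Context (xi : nat -> Omega -> Z4) (c : nat -> Omega -> bool) (X : nat -> Omega -> Z4).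
Hypotheses (xi_rv : forall i, discrete_rv (xi i)) (c_rv : forall n, discrete_rv (c n))
  (X_rv : forall n, discrete_rv (X n)).
Hypotheses (P_xi : forall i x, P (xi i @^-1` [set x]) = (theta x)%:E)
  (P_c : forall n, P (c n @^-1` [set true]) = (2^-1 : R)%:E)
  (P_X : forall n x, P (X n @^-1` [set x]) = (theta x)%:E).
Hypothesis indep : mutually_independent P (fun a : (nat + nat) + nat =>
  match a with
  | inl (inl i) => preimages (xi i)
  | inl (inr n) => preimages (c n)
  | inr n => preimages (X n)
  end).

Definition atom (cs : seq bool) (v : nat -> Z4) (s : seq nat) (b : nat -> Z4)
    (i : (nat + nat) + nat) : set Omega :=
  match i with
  | inl (inl j) => xi j @^-1` [set v j - v j.+1]
  | inl (inr n) => c n @^-1` [set nth false cs n]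
  | inr t => X t @^-1` [set b (index t s) - b (index t s).+1]
  end.

Definition atom_indices (k N : nat) (s : seq nat) : seq ((nat + nat) + nat) :=
  [seq inl (inr n) | n <- iota 0 k] ++ [seq inl (inl j) | j <- iota 0 N] ++
  [seq inr t | t <- s].

Definition atoms_set k N cs v s b : set Omega :=
  [set w | forall i, i \in atom_indices k N s -> atom cs v s b i w].

Lemma uniq_atom_indices k N s : uniq s -> uniq (atom_indices k N s).
Proof.
move=> us; rewrite /atom_indices !cat_uniq !map_inj_uniq ?iota_uniq ?us //=;
  try by move=> ? ? [].
rewrite andbT; apply/andP; split.
  by apply/hasPn => x; rewrite mem_cat => /orP[] /mapP[y _ ->]; apply/mapP => -[].
by apply/hasPn => x /mapP[y _ ->]; apply/mapP => -[].
Qed.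

Lemma atoms_setP k N cs v s b w : uniq s ->
  atoms_set k N cs v s b w <->
  [/\ forall n, (n < k)%N -> c n w = nth false cs n,
      forall j, (j < N)%N -> xi j w = v j - v j.+1 &
      forall r, (r < size s)%N -> X (nth 0%N s r) w = b r - b r.+1].
Proof.
move=> us; split=> [atoms | [cw xiw Xw] i].
  split=> [n nk | j jN | r rs].
  - by apply: (atoms (inl (inr n))); rewrite !mem_cat map_f ?mem_iota.
  - by apply: (atoms (inl (inl j))); rewrite !mem_cat map_f ?mem_iota ?orbT.
  - have := atoms (inr (nth 0%N s r)); rewrite /= index_uniq //; apply.
    by rewrite !mem_cat map_f ?mem_nth ?orbT.
rewrite !mem_cat => /orP[|/orP[]] /mapP[y + ->] /=; rewrite ?mem_iota /=.
- exact: cw.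
- exact: xiw.
- by move=> ys; have := Xw (index y s); rewrite nth_index // index_mem; apply.
Qed.

Lemma measurable_atoms_set k N cs v s b : measurable (atoms_set k N cs v s b).
Proof.
rewrite (_ : atoms_set _ _ _ _ _ _ =
  \bigcap_(i in [set` atom_indices k N s]) atom cs v s b i) // bigcap_seq.
apply: bigsetI_measurable => -[[j|n]|t] _ /=.
- exact: xi_rv.
- exact: c_rv.
- exact: X_rv.
Qed.

Lemma probability_coin n e : P (c n @^-1` [set e]) = (2^-1 : R)%:E.
Proof.
case: e; first exact: P_c.
rewrite (_ : _ @^-1` _ = ~` (c n @^-1` [set true])); last first.
  by apply/seteqP; split => w /=; case: (c n w).
rewrite probability_setC ?P_c //; last exact: c_rv.
by rewrite -EFinB; congr EFin; field.
Qed.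

Lemma probability_atoms_set k N cs v s b : uniq s ->
  P (atoms_set k N cs v s b) =
  ((2^-1 : R) ^+ k * incr_prod theta v 0 N * incr_prod theta b 0 (size s))%:E.
Proof.
move=> us; rewrite [LHS]indep; first last.
- by move=> [[j|n]|t] _ /=; eexists.
- exact: uniq_atom_indices.
rewrite !big_cat !big_map /= !EFinM -muleA; congr (_ * (_ * _))%E.
- under eq_bigr do rewrite probability_coin.
  by rewrite prodEFin big_const_seq count_predT size_iota iter_mulr_1.
- under eq_bigr do rewrite P_xi.
  by rewrite prodEFin /incr_prod /index_iota subn0.
- under eq_bigr do rewrite P_X.
  rewrite prodEFin /incr_prod; congr EFin.
  rewrite (big_nth 0%N) /index_iota subn0; apply: eq_big_seq => r.
  by rewrite mem_iota => /andP[_ rs]; rewrite index_uniq.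
Qed.

Definition window_set k M a b : set Omega :=
  [set w | snake_window (xi^~ w) (c^~ w) (X^~ w) k M a b].

Definition coins_set k (cs : seq bool) : set Omega :=
  [set w | forall n, (n < k)%N -> c n w = nth false cs n].

Lemma window_coinsE k M a b cs : (k < M)%N ->
  let p := coin_stack (nth false cs) k in
  window_set k M a b `&` coins_set k cs =
  if compatible M (size p.1) p.2 a b then
    atoms_set k (M.-1 + (p.2 - size p.1)) cs (glued_path M (size p.1) p.2 a b) p.1 b
  else set0.
Proof.
move=> kM p; have us : uniq p.1 := uniq_coin_stack _ _.
apply/seteqP; split=> w.
  move=> [+ cw]; rewrite /window_set /= (snake_window_coins _ _ _ _ _ cw) => win.
  by have [-> xi_v X_b] := snake_window_stack kM win; apply/atoms_setP.
case: ifP => // abc /(@atoms_setP _ _ _ _ _ _ _ us) [cw xi_v X_b]; split=> //.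
by rewrite /window_set /= (snake_window_coins _ _ _ _ _ cw); exact: stack_snake_window.
Qed.

Lemma measurable_window_coins k M a b cs : (k < M)%N ->
  measurable (window_set k M a b `&` coins_set k cs).
Proof.
by move=> kM; rewrite window_coinsE //; case: ifP => _ //; exact: measurable_atoms_set.
Qed.

Lemma window_set_coins k M a b :
  window_set k M a b =
  \big[setU/set0]_(cs : k.-tuple bool) (window_set k M a b `&` coins_set k cs).
Proof.
apply/seteqP; split=> [w win|w]; last by rewrite -bigcup_seq => -[cs _ []].
rewrite -bigcup_seq; exists [tuple c i w | i < k]; first by rewrite /= mem_index_enum.
by split=> // n nk; rewrite -[n]/(nat_of_ord (Ordinal nk)) nth_mktuple.
Qed.

Lemma measurable_window_set k M a b : (k < M)%N -> measurable (window_set k M a b).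
Proof.
move=> kM; rewrite window_set_coins.
by apply: bigsetU_measurable => cs _; exact: measurable_window_coins.
Qed.

Lemma probability_window_set k M a b : (k < M)%N ->
  P (window_set k M a b) =
  ((2^-1 : R) ^+ k * \sum_(cs : k.-tuple bool) stack_weight theta M k a b cs)%:E.
Proof.
move=> kM; rewrite window_set_coins measure_big_setU_seq ?index_enum_uniq //; first last.
- move=> cs cs' /eqP neq; apply/seteqP; split=> // w [[_ cw] [_ cw']]; apply: neq.
  apply/val_inj/(@eq_from_nth _ false); rewrite ?size_tuple // => n nk.
  by rewrite -cw // -cw'.
- by move=> cs; exact: measurable_window_coins.
rewrite mulr_sumr -sumEFin; apply: eq_bigr => cs _.
rewrite window_coinsE // /stack_weight /snake_weight; case: ifP => _.
  by rewrite mulrA; exact/probability_atoms_set/uniq_coin_stack.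
by rewrite measure0 mulr0.
Qed.

Variable k : nat.

Definition endpoint_zero : set Omega :=
  [set w | phat (snake (snake_init (xi^~ w)) (c^~ w) (X^~ w) k) = 0].

Definition initial_current (w : Omega) : (nat -> Z4) * (nat -> Z4) :=
  (ptail (snake_init (xi^~ w)),
   ptail (snake (snake_init (xi^~ w)) (c^~ w) (X^~ w) k)).

Definition current_initial (w : Omega) : (nat -> Z4) * (nat -> Z4) :=
  ((initial_current w).2, (initial_current w).1).

Lemma initial_current_cylinder M a b :
  initial_current @^-1` cylinder M a b `&` endpoint_zero = window_set k M a b.
Proof. by []. Qed.

Lemma current_initial_cylinder M a b :
  current_initial @^-1` cylinder M a b `&` endpoint_zero = window_set k M b a.
Proof.
by apply/seteqP; split=> w [ab W0]; split=> // r rM; have [] := ab r rM.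
Qed.

Lemma long_cylinders_agree :
  long_cylinders k `<=` preimage_agree P initial_current current_initial endpoint_zero.
Proof.
move=> A [->|[M [a [b [kM ->]]]]].
  by rewrite /preimage_agree /= !preimage_set0 !set0I measure0.
rewrite /preimage_agree /= initial_current_cylinder current_initial_cylinder.
split; [exact: measurable_window_set | exact: measurable_window_set |].
by rewrite !probability_window_set // sum_stack_weight_sym.
Qed.

Lemma measurable_endpoint_zero : measurable endpoint_zero.
Proof.
rewrite -[endpoint_zero]setTI -(preimage_setT initial_current).
rewrite -(bigcup_prefix_cylinder k.+1) preimage_bigcup setI_bigcupl.
apply: bigcup_measurable => n _.
suff /long_cylinders_agree[] : long_cylinders k (prefix_cylinder k.+1 n) by [].
rewrite /prefix_cylinder; case: unpickle => [l|]; last by left.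
by right; exists k.+1; do 2 eexists; split.
Qed.

Lemma exchangeable_initial_current B : seq_pair_measurable B ->
  P (initial_current @^-1` B `&` endpoint_zero) =
  P (current_initial @^-1` B `&` endpoint_zero).
Proof.
move=> /(@seq_pair_measurable_long_cylinders k) mB.
have [] // := sigma_preimage_agree measurable_endpoint_zero
  (@setI_closed_long_cylinders _ k) long_cylinders_agree mB.
Qed.

End SnakeProbability.

Theorem lemma3p9 (R : realType) (theta : Z4 -> R) (sigma : R)
  (d : measure_display) (Omega : measurableType d) (P : probability Omega R)
  (xi : nat -> Omega -> Z4) (c : nat -> Omega -> bool) (X : nat -> Omega -> Z4)
  (k : nat) :
  is_pmf theta -> symmetric_law theta -> small_exp_moments theta ->
  generating_support theta -> covariance_scalar theta sigma ->
  (forall i, discrete_rv (xi i)) -> (forall n, discrete_rv (c n)) ->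
  (forall n, discrete_rv (X n)) ->
  (forall i x, P (xi i @^-1` [set x]) = (theta x)%:E) ->
  (forall n, P (c n @^-1` [set true]) = (2^-1 : R)%:E) ->
  (forall n x, P (X n @^-1` [set x]) = (theta x)%:E) ->
  mutually_independent P (fun a : (nat + nat) + nat =>
     match a with
     | inl (inl i) => preimages (xi i)
     | inl (inr n) => preimages (c n)
     | inr n => preimages (X n)
     end) ->
  let W := fun (n : nat) (w : Omega) =>
    snake (snake_init (fun i => xi i w)) (fun m => c m w) (fun m => X m w) n in
  let E := [set w | phat (W k w) = 0] in
  (1 <= k)%N ->
  (0 < P E)%E ->
  forall B, seq_pair_measurable B ->
    condP P E [set w | B (pshift (W 0%N w), pshift (W k w))] =
    condP P E [set w | B (pshift (W k w), pshift (W 0%N w))].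
Proof.
move=> _ _ _ _ _ xi_rv c_rv X_rv P_xi P_c P_X indep W E _ _ B mB.
rewrite /condP; congr (fine _ / _).
exact: (exchangeable_initial_current xi_rv c_rv X_rv P_xi P_c P_X indep k mB).
Qed.
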